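(* Let $p, q$ be distinct primes and $n = pq$. Then the zero-divisor graph $\Gamma(\mathbb{Z}_n)$ is a very cost effective graph.
   Context: $\mathbb{Z}_n$ is the ring of residue classes modulo $n$. The zero-divisor graph $\Gamma(\mathbb{Z}_n)$ has as vertices the nonzero zero-divisors of $\mathbb{Z}_n$, two distinct vertices being adjacent iff their product is $0$. For a graph $G=(V,E)$ and $S\subseteq V$, a vertex $v\in S$ is very cost effective if $|N(v)\cap S| < |N(v)\cap (V\setminus S)|$, where $N(v)$ is the open neighborhood of $v$; $S$ is very cost effective if every vertex of $S$ is. A bipartition $\{S, V\setminus S\}$ is very cost effective if both parts are very cost effective sets, and $G$ is very cost effective if it has a very cost effective bipartition. *)

From mathcomp Require Import all_boot.
Set Implicit Arguments. Unset Strict Implicit. Unset Printing Implicit Defensive.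

(* A simple graph given by a vertex set V inside a finite type T and an
   adjacency relation adj (only used between distinct vertices of V). *)

Definition nbhd (T : finType) (V : {set T}) (adj : rel T) (v : T) : {set T} :=
  [set u in V | (u != v) && adj v u].

Definition vce_vertex (T : finType) (V : {set T}) (adj : rel T)
  (S : {set T}) (v : T) : bool :=
  #|nbhd V adj v :&: S| < #|nbhd V adj v :&: (V :\: S)|.

Definition vce_set (T : finType) (V : {set T}) (adj : rel T) (S : {set T}) : bool :=
  [forall v in S, vce_vertex V adj S v].

Definition vce_bipartition (T : finType) (V : {set T}) (adj : rel T)
  (S : {set T}) : bool :=
  [&& S \subset V, vce_set V adj S & vce_set V adj (V :\: S)].

Definition vce_graph (T : finType) (V : {set T}) (adj : rel T) : Prop :=
  exists S : {set T}, vce_bipartition V adj S.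

Definition zd_mul0 (n : nat) (x y : 'I_n) : bool := (x * y) %% n == 0.

Definition zd_vertices (n : nat) : {set 'I_n} :=
  [set x : 'I_n | (val x != 0) && [exists y : 'I_n, (val y != 0) && zd_mul0 x y]].

Definition zd_adj (n : nat) : rel 'I_n := fun x y => (x != y) && zd_mul0 x y.

Definition zero_divisor_graph_vce (n : nat) : Prop :=
  vce_graph (zd_vertices n) (@zd_adj n).

(* The graph is complete bipartite: its vertices are the nonzero multiples of
   p and the nonzero multiples of q (no nonzero residue is a multiple of both),
   and x y = 0 mod pq exactly when x and y lie on opposite sides.  Taking S to
   be one side, a vertex has no neighbour on its own side and at least one
   (namely q, resp. p) on the other, so both parts are very cost effective. *)

From mathcomp Require Import all_boot.

Set Implicit Arguments.
Unset Strict Implicit.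
Unset Printing Implicit Defensive.

Section IndependentBipartition.

Variables (T : finType) (V : {set T}) (adj : rel T).

Definition independent (A : {set T}) : Prop :=
  {in A &, forall u v, u != v -> ~~ adj u v}.

Lemma nbhd_sub v : nbhd V adj v \subset V.
Proof. by apply/subsetP => u; rewrite inE => /andP[]. Qed.

Lemma vce_vertex_independent (S : {set T}) v :
  independent S -> v \in S -> nbhd V adj v != set0 -> vce_vertex V adj S v.
Proof.
move=> indS vS nbhd_v.
have nbhdIS : nbhd V adj v :&: S = set0.
  apply/setP => u; rewrite !inE; apply/negP => /andP[/and3P[_ uv adj_vu] uS].
  by move: (indS v u vS uS); rewrite eq_sym uv adj_vu => /(_ isT).
have nbhdID : nbhd V adj v :&: (V :\: S) = nbhd V adj v.
  by rewrite setIDA (setIidPl (nbhd_sub v)); apply/setDidPl; rewrite -setI_eq0 nbhdIS.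
by rewrite /vce_vertex nbhdIS nbhdID cards0 card_gt0.
Qed.

Lemma vce_bipartition_independent (S : {set T}) :
  S \subset V -> independent S -> independent (V :\: S) ->
  {in V, forall v, nbhd V adj v != set0} -> vce_bipartition V adj S.
Proof.
move=> sSV indS indD nbhdV; apply/and3P; split=> //; apply/forallP => v;
  apply/implyP => vS; apply: vce_vertex_independent => //; apply: nbhdV.
- exact: (subsetP sSV).
- by move: vS; rewrite inE => /andP[].
Qed.

End IndependentBipartition.

Lemma zd_mul0_dvd n d (x y : 'I_n) : d %| n -> zd_mul0 x y -> d %| x * y.
Proof. exact: dvdn_trans. Qed.

Lemma zd_adj_cofactor n r s (v w : 'I_n) :
  r * s = n -> r %| v -> val w = s -> ~~ (r %| s) -> zd_adj v w.
Proof.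
move=> rs_n rv ws r_ndvd_s; apply/andP; split.
- by apply/eqP => vw; move: r_ndvd_s; rewrite -ws -vw rv.
- by rewrite /zd_mul0 -/(dvdn n _) -{1}rs_n ws dvdn_mul.
Qed.

Lemma zd_adj_mem_nbhd n (v w : 'I_n) :
  val v != 0 -> val w != 0 -> zd_adj v w ->
  w \in nbhd (zd_vertices n) (@zd_adj n) v.
Proof.
move=> v0 w0 adj_vw; have /andP[vw vw0] := adj_vw.
rewrite !inE w0 eq_sym vw adj_vw /= andbT.
by apply/existsP; exists v; rewrite v0 /zd_mul0 mulnC.
Qed.

Definition zd_multiples n d : {set 'I_n} := [set x : 'I_n | (val x != 0) && (d %| x)].

Section ZeroDivisorGraphSemiprime.

Variables p q : nat.
Hypotheses (p_pr : prime p) (q_pr : prime q) (p_neq_q : p != q).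

Local Notation V := (zd_vertices (p * q)).
Local Notation adj := (@zd_adj (p * q)).

Lemma ord_pq_ndvd_both (x : 'I_(p * q)) : val x != 0 -> ~~ ((p %| x) && (q %| x)).
Proof.
rewrite -lt0n => x0; rewrite -Gauss_dvd ?prime_coprime ?(dvdn_prime2 p_pr q_pr) //.
by apply/negP => pq_x; have := dvdn_leq x0 pq_x; rewrite leqNgt ltn_ord.
Qed.

Lemma exists_zd_adj_pq (v : 'I_(p * q)) :
  (p %| v) || (q %| v) -> exists2 w : 'I_(p * q), val w != 0 & zd_adj v w.
Proof.
case/orP => [pv | qv].
- exists (Ordinal (ltn_Pmull (prime_gt1 p_pr) (prime_gt0 q_pr))).
    by rewrite /= -lt0n prime_gt0.
  by apply: (zd_adj_cofactor (r := p) (s := q)) => //; rewrite dvdn_prime2.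
- exists (Ordinal (ltn_Pmulr (prime_gt1 q_pr) (prime_gt0 p_pr))).
    by rewrite /= -lt0n prime_gt0.
  apply: (zd_adj_cofactor (r := q) (s := p)) => //; first exact: mulnC.
  by rewrite dvdn_prime2 // eq_sym.
Qed.

Lemma mem_zd_vertices_pq (x : 'I_(p * q)) :
  (x \in V) = (val x != 0) && ((p %| x) || (q %| x)).
Proof.
rewrite inE; case x0: (val x != 0) => //=; apply/existsP/idP => [[y] | ].
- case/andP=> y0 xy0.
  have := zd_mul0_dvd (dvdn_mulr q (dvdnn p)) xy0.
  rewrite Euclid_dvdM // => /orP[-> // | py].
  have := zd_mul0_dvd (dvdn_mull p (dvdnn q)) xy0.
  rewrite Euclid_dvdM // => /orP[-> | qy]; first by rewrite orbT.
  by case/negP: (ord_pq_ndvd_both y0); rewrite py qy.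
- by case/exists_zd_adj_pq => w w0 /andP[_ xw0]; exists w; rewrite w0.
Qed.

Lemma zd_multiples_sub : zd_multiples (p * q) p \subset V.
Proof. by apply/subsetP => x; rewrite mem_zd_vertices_pq inE => /andP[-> ->]. Qed.

Lemma independent_zd_multiples : independent adj (zd_multiples (p * q) p).
Proof.
move=> u v; rewrite !inE => /andP[u0 pu] /andP[v0 pv] _; apply/negP.
case/andP=> _ /(zd_mul0_dvd (dvdn_mull p (dvdnn q))).
rewrite Euclid_dvdM // => /orP[qu | qv].
- by case/negP: (ord_pq_ndvd_both u0); rewrite pu qu.
- by case/negP: (ord_pq_ndvd_both v0); rewrite pv qv.
Qed.

Lemma independent_zd_multiples_compl :
  independent adj (V :\: zd_multiples (p * q) p).
Proof.
move=> u v; rewrite !in_setD !mem_zd_vertices_pq !inE.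
case/andP=> npu /andP[u0 _] /andP[npv /andP[v0 _]] _.
rewrite u0 /= in npu; rewrite v0 /= in npv.
apply/negP; case/andP=> _ /(zd_mul0_dvd (dvdn_mulr q (dvdnn p))).
by rewrite Euclid_dvdM // (negbTE npu) (negbTE npv).
Qed.

Lemma zd_nbhd_pq_neq0 : {in V, forall v, nbhd V adj v != set0}.
Proof.
move=> v; rewrite mem_zd_vertices_pq => /andP[v0 /exists_zd_adj_pq[w w0 adj_vw]].
by apply/set0Pn; exists w; apply: zd_adj_mem_nbhd.
Qed.

End ZeroDivisorGraphSemiprime.

Theorem mainTheorem2 (p q : nat) :
  prime p -> prime q -> p != q -> zero_divisor_graph_vce (p * q).
Proof.
move=> p_pr q_pr p_neq_q; exists (zd_multiples (p * q) p).
apply: vce_bipartition_independent.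
- exact: zd_multiples_sub.
- exact: independent_zd_multiples.
- exact: independent_zd_multiples_compl.
- exact: zd_nbhd_pq_neq0.
Qed.
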